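(* Let $\mathbb{F}$ be a field of characteristic $\ne2$ and let $M$ be a fully symmetric $n^d\times n^d$ matrix over $\mathbb{F}$. Then $\mathrm{PT\text{-}rank}(M)\le 2^{d-1}\,\mathrm{SoS}(Q_M)$.
   Context: Rows and columns are indexed by $[n]^d$. For $k\in[d]$, $M^{\top_k}$ swaps the $k$-th row index with the $k$-th column index; $M^{\top_\kappa}$ composes these over $k\in\kappa$. $M$ is fully symmetric if $M^{\top_k}=M$ for all $k\in[d]$. $M$ is PT-basic if $\mathrm{rank}(M^{\top_\kappa})=1$ for some $\kappa\subseteq[d]$; $\mathrm{PT\text{-}rank}(M)$ is the least number of PT-basic matrices summing to $M$. $Q_M=\sum_{\vec i,\vec j\in[n]^d}M_{\vec i,\vec j}X^{(1)}_{i_1}X^{(1)}_{j_1}\cdots X^{(d)}_{i_d}X^{(d)}_{j_d}$ is a commutative polynomial in $d$ blocks of $n$ variables. $\mathrm{SoS}(f)$ is the least $s$ such that $f=g_1^2+\cdots+g_s^2$ with each $g_i$ a $d$-multilinear form over $\mathbb{F}$ (each monomial of $g_i$ has exactly one variable from each block), and $\infty$ if none exists. *)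

From HB Require Import structures.
From mathcomp Require Import all_boot all_order all_algebra.
From mathcomp Require Import mpoly.
Set Implicit Arguments. Unset Strict Implicit. Unset Printing Implicit Defensive.
Import GRing.Theory.
Local Open Scope ring_scope.

Definition idx (n d : nat) := {ffun 'I_d -> 'I_n}.

Definition pmat (F : fieldType) (n d : nat) := 'M[F]_(#|{: idx n d}|).

Definition ent (F : fieldType) n d (M : pmat F n d) (i j : idx n d) : F :=
  M (enum_rank i) (enum_rank j).

Definition ptswap n d (kappa : {set 'I_d}) (i j : idx n d) : idx n d :=
  [ffun k => if k \in kappa then j k else i k].

Definition ptrans (F : fieldType) n d (kappa : {set 'I_d}) (M : pmat F n d)
  : pmat F n d :=
  \matrix_(a, b) ent M (ptswap kappa (enum_val a) (enum_val b))
                       (ptswap kappa (enum_val b) (enum_val a)).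

Definition ptrans1 (F : fieldType) n d (k : 'I_d) (M : pmat F n d) :=
  ptrans [set k] M.

Definition fully_symmetric (F : fieldType) n d (M : pmat F n d) : Prop :=
  forall k : 'I_d, ptrans1 k M = M.

Definition PT_basic (F : fieldType) n d (M : pmat F n d) : Prop :=
  exists kappa : {set 'I_d}, \rank (ptrans kappa M) = 1%N.

Definition PT_decomp (F : fieldType) n d (M : pmat F n d) (r : nat) : Prop :=
  exists B : 'I_r -> pmat F n d,
    (forall t, PT_basic (B t)) /\ M = \sum_(t < r) B t.

Definition PT_rank_le (F : fieldType) n d (M : pmat F n d) (r : nat) : Prop :=
  exists2 r', (r' <= r)%N & PT_decomp M r'.

Definition pvar (F : fieldType) (n d : nat) := #|{: 'I_d * 'I_n}|.
Definition polyR (F : fieldType) n d := {mpoly F[pvar F n d]}.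

Definition Xv (F : fieldType) n d (k : 'I_d) (i : 'I_n) : polyR F n d :=
  'X_(enum_rank (k, i)).

Definition QM (F : fieldType) n d (M : pmat F n d) : polyR F n d :=
  \sum_(i : idx n d) \sum_(j : idx n d)
     ent M i j *: \prod_(k < d) (Xv F k (i k) * Xv F k (j k)).

Definition mlform (F : fieldType) n d (c : idx n d -> F) : polyR F n d :=
  \sum_(i : idx n d) c i *: \prod_(k < d) Xv F k (i k).

Definition is_SoS (F : fieldType) n d (f : polyR F n d) (s : nat) : Prop :=
  exists c : 'I_s -> idx n d -> F, f = \sum_(t < s) (mlform (c t)) ^+ 2.

From HB Require Import structures.
From mathcomp Require Import all_boot all_order all_algebra.
From mathcomp Require Import mpoly.
Set Implicit Arguments. Unset Strict Implicit. Unset Printing Implicit Defensive.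
Import GRing.Theory.
Local Open Scope ring_scope.

(* Let N = sum_t c_t c_t^T be the Gram matrix of a decomposition
   Q_M = sum_t (sum_i c_t(i) X_i)^2.  Then Q_N = Q_M, and Q is invariant under
   every partial transpose, so the symmetrization 2^-d sum_kappa N^{T_kappa} is
   a fully symmetric matrix with the same form as M.  When 2 != 0 the form
   determines a fully symmetric matrix: the coefficient of the monomial of
   (a, b) is M_ab times a product of factors 1 and 2.  Hence M is that
   symmetrization.  As each c_t c_t^T is symmetric, its partial transposes by
   kappa and by the complement of kappa coincide, which leaves 2^(d-1) rank-one
   partial transposes per square. *)

Lemma natr_forall (R : comPzSemiRingType) (I : finType) (P : pred I) :
  [forall i, P i]%:R = \prod_i (P i)%:R :> R.
Proof.
have [/forallP allP|/forallPn[i notPi]] := boolP [forall i, P i].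
  by rewrite big1 // => i _; rewrite allP.
by rewrite (bigD1 i) //= (negbTE notPi) mul0r.
Qed.

Lemma sum_ffun2_prod (R : comPzSemiRingType) (I T : finType) (f : I -> T -> T -> R) :
  \sum_(i : {ffun I -> T}) \sum_(j : {ffun I -> T}) \prod_k f k (i k) (j k) =
  \prod_k \sum_x \sum_y f k x y.
Proof.
rewrite bigA_distr_bigA; apply: eq_bigr => i _.
by rewrite bigA_distr_bigA.
Qed.

Lemma perm_eq_pair (T : eqType) (x y u v : T) :
  perm_eq [:: x; y] [:: u; v] = ((x, y) == (u, v)) || ((x, y) == (v, u)).
Proof.
have swap (a b : T) : perm_eq [:: a; b] [:: b; a].
  by rewrite -[[:: a; b]]/([:: a] ++ [:: b]) perm_catC.
apply/idP/idP => [xy_uv|]; last by case/orP=> /eqP[-> ->].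
have : x \in [:: u; v] by rewrite -(perm_mem xy_uv) mem_head.
rewrite !inE => /orP[]/eqP x_eq; move: xy_uv; rewrite x_eq.
  by rewrite perm_cons => /perm_small_eq-/(_ isT)[->]; rewrite eqxx.
rewrite (permPr (swap u v)) perm_cons => /perm_small_eq-/(_ isT)[->].
by rewrite eqxx orbT.
Qed.

Lemma sum_perm_eq_pair (R : pzSemiRingType) (T : finType) (u v : T) :
  \sum_x \sum_y (perm_eq [:: x; y] [:: u; v])%:R = (u != v).+1%:R :> R.
Proof.
have -> : (u != v).+1 = #|pred2 (u, v) (v, u)|.
  by rewrite card2 xpair_eqE (eq_sym v) andbb.
rewrite (pair_bigA _ (fun x y => (perm_eq [:: x; y] [:: u; v])%:R)).
rewrite -sum1_card natr_sum [RHS]big_mkcond; apply: eq_bigr => -[x y] _.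
by rewrite perm_eq_pair !inE; case: ifP.
Qed.

Lemma card_sets (T : finType) : #|{set T}| = (2 ^ #|T|)%N.
Proof. by rewrite -[LHS]cardsT -powersetT card_powerset cardsT. Qed.

Lemma card_sets_notin (T : finType) (x : T) :
  #|[pred A : {set T} | x \notin A]| = (2 ^ #|T|.-1)%N.
Proof.
rewrite -(cardsC1 x) -card_powerset; apply: eq_card => A.
by rewrite powersetCE disjoint_sym disjoints1.
Qed.

Section PartialTranspose.
Variables (F : fieldType) (n d : nat).
Implicit Types (A B : pmat F n d) (kappa : {set 'I_d}).

Lemma pmatP A B : (forall i j, ent A i j = ent B i j) -> A = B.
Proof.
move=> eqAB; apply/matrixP => u v.
by have := eqAB (enum_val u) (enum_val v); rewrite /ent !enum_valK.
Qed.

Lemma ent_ptrans kappa A i j :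
  ent (ptrans kappa A) i j = ent A (ptswap kappa i j) (ptswap kappa j i).
Proof. by rewrite /ent /ptrans mxE !enum_rankK. Qed.

Lemma ptrans_is_linear kappa : linear (@ptrans F n d kappa).
Proof. by move=> a A B; apply/matrixP => u v; rewrite !mxE /ent !mxE. Qed.

HB.instance Definition _ kappa :=
  GRing.isLinear.Build F (pmat F n d) (pmat F n d) *:%R (ptrans kappa)
    (ptrans_is_linear kappa).

Lemma ptrans_comp kappa1 kappa2 A :
  ptrans kappa1 (ptrans kappa2 A) =
  ptrans [set k | (k \in kappa1) (+) (k \in kappa2)] A.
Proof.
apply: pmatP => i j; rewrite !ent_ptrans; congr ent; apply/ffunP => k;
by rewrite !ffunE inE; case: (k \in kappa1); case: (k \in kappa2).
Qed.

Lemma ptrans_set0 A : ptrans set0 A = A.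
Proof.
by apply: pmatP => i j; rewrite ent_ptrans; congr ent; apply/ffunP => k; rewrite ffunE inE.
Qed.

Lemma ptransK kappa : involutive (@ptrans F n d kappa).
Proof.
move=> A; rewrite ptrans_comp -[RHS]ptrans_set0; congr ptrans.
by apply/setP => k; rewrite !inE addbb.
Qed.

Lemma ptrans_setT A : ptrans setT A = A^T.
Proof.
apply: pmatP => i j; rewrite ent_ptrans /ent mxE; congr (A _ _); congr enum_rank;
by apply/ffunP => k; rewrite ffunE inE.
Qed.

Lemma ptrans_setC kappa A : ptrans (~: kappa) A = ptrans kappa A^T.
Proof.
by rewrite -ptrans_setT ptrans_comp; congr ptrans; apply/setP => k; rewrite !inE addbT.
Qed.

Lemma ptrans_fully_symmetric kappa A : fully_symmetric A -> ptrans kappa A = A.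
Proof.
move=> symA; elim: {kappa}_.+1 {-2}kappa (ltnSn #|kappa|) => // m IHm kappa.
have [-> _|[k kappa_k]] := set_0Vmem kappa; first exact: ptrans_set0.
rewrite (cardsD1 k) kappa_k ltnS => card_lt.
have -> : kappa = [set k' | (k' \in [set k]) (+) (k' \in kappa :\ k)].
  by apply/setP => k'; rewrite !inE; case: eqP => [->|].
by rewrite -ptrans_comp IHm //; apply: symA.
Qed.

Definition ptsym A := \sum_(kappa : {set 'I_d}) ptrans kappa A.

Lemma ptsym_is_linear : linear ptsym.
Proof.
move=> c A B; rewrite /ptsym scaler_sumr -big_split.
by apply: eq_bigr => kappa _; rewrite linearP.
Qed.

HB.instance Definition _ :=
  GRing.isLinear.Build F (pmat F n d) (pmat F n d) *:%R ptsym ptsym_is_linear.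

Lemma fully_symmetric_ptsym A : fully_symmetric (ptsym A).
Proof.
move=> k; rewrite /ptrans1 /ptsym raddf_sum.
pose toggle kappa := [set k' | (k' \in [set k]) (+) (k' \in kappa)].
have toggleK : involutive toggle.
  by move=> kappa; apply/setP => k'; rewrite !inE addbA addbb.
rewrite [RHS](reindex_inj (inv_inj toggleK)); apply: eq_bigr => kappa _.
exact: ptrans_comp.
Qed.

Lemma ptsym_trmx_eq (x : 'I_d) A : A^T = A ->
  ptsym A = \sum_(kappa : {set 'I_d} | x \notin kappa) ptrans kappa (A *+ 2).
Proof.
move=> symA; rewrite /ptsym (bigID (fun kappa => x \in kappa)) /=.
rewrite (reindex_inj (@setC_inj _)) /=; under eq_bigl do rewrite in_setC.
rewrite -big_split; apply: eq_bigr => kappa _.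
by rewrite ptrans_setC symA raddfMn mulr2n.
Qed.

End PartialTranspose.

Section QuadraticForm.
Variables (F : fieldType) (n d : nat).
Implicit Types (A B : pmat F n d) (i j a b : idx n d) (kappa : {set 'I_d}).

Lemma QM_is_linear : linear (@QM F n d).
Proof.
move=> c A B; rewrite /QM scaler_sumr -big_split; apply: eq_bigr => i _ /=.
rewrite scaler_sumr -big_split; apply: eq_bigr => j _ /=.
by rewrite /ent !mxE scalerDl scalerA.
Qed.

HB.instance Definition _ :=
  GRing.isLinear.Build F (pmat F n d) (polyR F n d) *:%R (@QM F n d) QM_is_linear.

Definition ptmono i j : 'X_{1..pvar F n d} :=
  (\sum_(k < d) (U_(enum_rank (k, i k)) + U_(enum_rank (k, j k))))%MM.

Lemma QM_ptmono A : QM A = \sum_i \sum_j ent A i j *: 'X_[ptmono i j].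
Proof.
apply: eq_bigr => i _; apply: eq_bigr => j _; congr (_ *: _).
rewrite (big_morph _ (@mpolyXD _ F) (@mpolyX0 _ F)).
by apply: eq_bigr => k _; rewrite mpolyXD.
Qed.

Lemma ptmono_ptswap kappa i j :
  ptmono (ptswap kappa i j) (ptswap kappa j i) = ptmono i j.
Proof.
by apply: eq_bigr => k _; rewrite !ffunE; case: (k \in kappa); rewrite // addmC.
Qed.

Lemma QM_ptrans kappa A : QM (ptrans kappa A) = QM A.
Proof.
pose swap (p : idx n d * idx n d) := (ptswap kappa p.1 p.2, ptswap kappa p.2 p.1).
have swapK : involutive swap.
  by move=> [i j]; congr pair; apply/ffunP => k; rewrite !ffunE; case: (k \in kappa).
rewrite !QM_ptmono !pair_bigA [RHS](reindex_inj (inv_inj swapK)).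
by apply: eq_bigr => -[i j] _; rewrite ent_ptrans ptmono_ptswap.
Qed.

Lemma QM_ptsym A : QM (ptsym A) = (2 ^ d)%:R *: QM A.
Proof.
rewrite raddf_sum /= (eq_bigr _ (fun kappa _ => QM_ptrans kappa A)).
by rewrite sumr_const card_sets card_ord scaler_nat.
Qed.

Lemma ptmono_count i j k x :
  ptmono i j (enum_rank (k, x)) = count_mem x [:: i k; j k].
Proof.
have rank_eq k' y : (enum_rank (k', y) == enum_rank (k, x)) = (k' == k) && (y == x).
  by rewrite (inj_eq enum_rank_inj) xpair_eqE.
rewrite mnm_sumE (bigD1 k) //= big1 => [|k' /negbTE k'k]; last first.
  by rewrite mnmDE !mnm1E !rank_eq k'k.
by rewrite mnmDE !mnm1E !rank_eq eqxx addn0 /= addn0.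
Qed.

Lemma eq_ptmono i j a b :
  (ptmono i j == ptmono a b) = [forall k, perm_eq [:: i k; j k] [:: a k; b k]].
Proof.
apply/eqP/forallP => [eq_ij_ab k|perm_ij_ab].
  by apply/allP => x _; apply/eqP; rewrite -!ptmono_count eq_ij_ab.
apply/mnmP => v; rewrite -[v]enum_valK; case: (enum_val v) => k x.
by rewrite !ptmono_count; apply/permP/perm_ij_ab.
Qed.

Lemma ent_fully_symmetric A i j a b : fully_symmetric A ->
  (forall k, perm_eq [:: i k; j k] [:: a k; b k]) -> ent A i j = ent A a b.
Proof.
move=> symA perm_ij_ab; pose kappa := [set k | i k != a k].
suff [-> ->] : i = ptswap kappa a b /\ j = ptswap kappa b a.
  by rewrite -ent_ptrans ptrans_fully_symmetric.
split; apply/ffunP => k; rewrite ffunE inE; move: (perm_ij_ab k);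
by rewrite perm_eq_pair => /orP[]/eqP[-> j_k]; rewrite ?j_k ?eqxx //; case: eqP.
Qed.

Lemma mcoeff_QM_fully_symmetric A a b : fully_symmetric A ->
  (QM A)@_(ptmono a b) = ent A a b * \prod_k (a k != b k).+1%:R.
Proof.
move=> symA.
have -> : \prod_k (a k != b k).+1%:R = \sum_(i : idx n d) \sum_(j : idx n d)
    [forall k, perm_eq [:: i k; j k] [:: a k; b k]]%:R :> F.
  rewrite -(eq_bigr _ (fun k _ => sum_perm_eq_pair F (a k) (b k))) -sum_ffun2_prod.
  by apply: eq_bigr => i _; apply: eq_bigr => j _; rewrite natr_forall.
rewrite QM_ptmono raddf_sum mulr_sumr; apply: eq_bigr => i _.
rewrite raddf_sum mulr_sumr; apply: eq_bigr => j _.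
rewrite /= mcoeffZ mcoeffX eq_ptmono.
case: forallP => [perm_ij_ab|_]; last by rewrite !mulr0.
by rewrite (ent_fully_symmetric symA perm_ij_ab).
Qed.

Lemma QM_fully_symmetric_inj A B : (2%:R : F) != 0 ->
  fully_symmetric A -> fully_symmetric B -> QM A = QM B -> A = B.
Proof.
move=> two_neq0 symA symB eq_QM.
have symAB : fully_symmetric (A - B).
  by move=> k; move: (symA k) (symB k); rewrite /ptrans1 raddfB /= => -> ->.
apply: pmatP => a b; apply/eqP; rewrite -subr_eq0.
have count_neq0 : \prod_k (a k != b k).+1%:R != 0 :> F.
  by apply/prodf_neq0 => k _; case: (a k != b k); rewrite ?oner_neq0.
have := mcoeff_QM_fully_symmetric a b symAB.
rewrite raddfB /= eq_QM subrr mcoeff0 => /esym/eqP.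
by rewrite mulf_eq0 (negbTE count_neq0) orbF /ent !mxE.
Qed.

Definition outer_mx (c : idx n d -> F) : pmat F n d :=
  let v := \col_a c (enum_val a) in v *m v^T.

Lemma ent_outer_mx c i j : ent (outer_mx c) i j = c i * c j.
Proof. by rewrite /ent !mxE big_ord1 !mxE !enum_rankK. Qed.

Lemma trmx_outer_mx c : (outer_mx c)^T = outer_mx c.
Proof. by rewrite /outer_mx trmx_mul trmxK. Qed.

Lemma rank_outer_mx c : (\rank (outer_mx c) <= 1)%N.
Proof. exact: leq_trans (mxrankM_maxl _ _) (rank_leq_col _). Qed.

Lemma QM_outer_mx c : QM (outer_mx c) = mlform c ^+ 2.
Proof.
rewrite /QM expr2 mulr_suml; apply: eq_bigr => i _.
rewrite mulr_sumr; apply: eq_bigr => j _.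
by rewrite ent_outer_mx -scalerAl -scalerAr scalerA big_split.
Qed.

End QuadraticForm.

Section PTRank.
Variables (F : fieldType) (n d : nat).
Implicit Types (A B : pmat F n d).

Lemma PT_rank_le0 r : PT_rank_le (0 : pmat F n d) r.
Proof. by exists 0%N => //; exists (fun=> 0); split=> [[]|] //; rewrite big_ord0. Qed.

Lemma PT_rank_leD A B r1 r2 : PT_rank_le A r1 -> PT_rank_le B r2 ->
  PT_rank_le (A + B) (r1 + r2).
Proof.
move=> [r1' le_r1 [A_ [basicA ->]]] [r2' le_r2 [B_ [basicB ->]]].
exists (r1' + r2')%N; first exact: leq_add.
exists (fun t => match split t with inl t1 => A_ t1 | inr t2 => B_ t2 end).
split=> [t|]; first by case: (split t).
rewrite big_split_ord; congr (_ + _); apply: eq_bigr => t _.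
  by rewrite -/(unsplit (inl t)) unsplitK.
by rewrite -/(unsplit (inr t)) unsplitK.
Qed.

Lemma PT_rank_le_sum I (r : seq I) (P : pred I) (G : I -> pmat F n d) (m : I -> nat) :
  (forall i, P i -> PT_rank_le (G i) (m i)) ->
  PT_rank_le (\sum_(i <- r | P i) G i) (\sum_(i <- r | P i) m i)%N.
Proof.
move=> rankG; apply: (big_ind2 (fun A r => PT_rank_le A r)) => //.
  exact: PT_rank_le0.
by move=> A1 r1 A2 r2; apply: PT_rank_leD.
Qed.

Lemma PT_rank_le1 kappa A : (\rank (ptrans kappa A) <= 1)%N -> PT_rank_le A 1.
Proof.
rewrite leq_eqVlt ltnS leqn0 mxrank_eq0 => /orP[/eqP rank1|/eqP A0]; last first.
  by rewrite -(ptransK kappa A) A0 raddf0; apply: PT_rank_le0.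
by exists 1%N => //; exists (fun=> A); split=> [_|]; [exists kappa | rewrite big_ord1].
Qed.

Lemma PT_rank_le_ptrans_sum (P : pred {set 'I_d}) A : (\rank A <= 1)%N ->
  PT_rank_le (\sum_(kappa | P kappa) ptrans kappa A) #|P|.
Proof.
move=> rankA; rewrite -[#|P|]sum1_card; apply: PT_rank_le_sum => kappa _.
by apply: (@PT_rank_le1 kappa); rewrite ptransK.
Qed.

Lemma PT_rank_le_ptsym A : A^T = A -> (\rank A <= 1)%N ->
  PT_rank_le (ptsym A) (2 ^ d.-1).
Proof.
move=> symA rankA; have [d0|d_gt0] := posnP d.
  have -> : (2 ^ d.-1)%N = #|{set 'I_d}| by rewrite card_sets card_ord d0.
  exact: PT_rank_le_ptrans_sum.
pose x := Ordinal d_gt0.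
have -> : (2 ^ d.-1)%N = #|[pred kappa : {set 'I_d} | x \notin kappa]|.
  by rewrite card_sets_notin card_ord.
rewrite (ptsym_trmx_eq x symA); apply: PT_rank_le_ptrans_sum.
by rewrite -scaler_nat (leq_trans (mxrank_scale _ _)).
Qed.

End PTRank.

Theorem lemma3p15 (F : fieldType) (n d : nat) (M : pmat F n d) :
  ~~ (2%N \in [pchar F]) ->
  fully_symmetric M ->
  forall s : nat, is_SoS (QM M) s ->
  PT_rank_le M (2 ^ d.-1 * s)%N.
Proof.
move=> char2 symM s [c QM_M].
have two_neq0 : (2%:R : F) != 0 by apply: contra char2 => two0; rewrite inE /= two0.
pose a : F := (2 ^ d)%:R^-1.
have a_inv : (2 ^ d)%:R * a = 1 by rewrite mulfV // natrX expf_neq0.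
pose A t := a *: outer_mx (c t).
have -> : M = \sum_(t < s) ptsym (A t).
  apply: QM_fully_symmetric_inj => //.
    by rewrite -raddf_sum; apply: fully_symmetric_ptsym.
  rewrite QM_M raddf_sum; apply: eq_bigr => t _.
  by rewrite /= QM_ptsym linearZ scalerA a_inv scale1r /= QM_outer_mx.
rewrite mulnC -[in X in PT_rank_le _ X](card_ord s) -sum_nat_const.
apply: PT_rank_le_sum => t _; apply: PT_rank_le_ptsym.
  by rewrite linearZ /= trmx_outer_mx.
by rewrite (leq_trans (mxrank_scale _ _)) ?rank_outer_mx.
Qed.
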